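(* Let $n$ be even, $k\ge2$, and let $f:\mathbb{V}_n\to\mathbb{Z}_{2^k}$ be given as $f(x)=a_0(x)+2a_1(x)+\cdots+2^{k-1}a_{k-1}(x)$ with Boolean functions $a_j$. Then $f$ is gbent if and only if $\mathcal{A}=a_{k-1}\oplus\langle a_0,a_1,\ldots,a_{k-2}\rangle$ is an affine space consisting of bent functions such that for any $h_0,h_1,h_2,h_3\in\mathcal{A}$ with $h_0\oplus h_1\oplus h_2\oplus h_3=0$ we have $h_0^*\oplus h_1^*\oplus h_2^*\oplus h_3^*=0$.
   Context: $\mathbb{V}_n$ is an $n$-dimensional $\mathbb{F}_2$-vector space with inner product $u\cdot x$. For a Boolean $g$, $\mathcal{W}_g(u)=\sum_x(-1)^{g(x)\oplus u\cdot x}$; $g$ is bent if $|\mathcal{W}_g(u)|=2^{n/2}$ for all $u$, and then its dual $g^*$ is the Boolean function with $\mathcal{W}_g(u)=2^{n/2}(-1)^{g^*(u)}$. $\langle a_0,\ldots,a_{k-2}\rangle$ is the $\mathbb{F}_2$-span of these functions and $a_{k-1}\oplus L=\{a_{k-1}\oplus h: h\in L\}$. For $f:\mathbb{V}_n\to\mathbb{Z}_{2^k}$, $\mathcal{H}_f(u)=\sum_x\zeta_{2^k}^{f(x)}(-1)^{u\cdot x}$ with $\zeta_{2^k}=e^{2\pi i/2^k}$; $f$ is gbent if $|\mathcal{H}_f(u)|=2^{n/2}$ for all $u$. *)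

From HB Require Import structures.
From mathcomp Require Import all_boot all_order all_algebra all_field.
Set Implicit Arguments. Unset Strict Implicit. Unset Printing Implicit Defensive.
Import Order.TTheory GRing.Theory Num.Theory.
Local Open Scope ring_scope.

Definition V (n : nat) := {ffun 'I_n -> bool}.

Definition dot (n : nat) (u x : V n) : bool :=
  \big[addb/false]_(i < n) (u i && x i).

Definition walsh (n : nat) (g : V n -> bool) (u : V n) : int :=
  \sum_(x : V n) (-1) ^+ (g x (+) dot u x).

Definition bent (n : nat) (g : V n -> bool) : Prop :=
  forall u : V n, `|walsh g u| = (2 ^ n./2)%:Z.

(* dual g^* : W_g(u) = 2^(n/2) (-1)^(g^*(u)); for bent g this means
   g^*(u) = true iff W_g(u) < 0 *)
Definition dual (n : nat) (g : V n -> bool) (u : V n) : bool :=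
  walsh g u < 0.

(* zeta_{2^k} = e^{2 pi i / 2^k} in algC: the (2^(k-1))-th root of -1 with
   minimal non-negative argument, i.e. e^{i pi / 2^(k-1)} *)
Definition zeta (k : nat) : algC := (2 ^ k.-1)%N.-root (-1).

Definition gwalsh (n k : nat) (f : V n -> 'Z_(2 ^ k)) (u : V n) : algC :=
  \sum_(x : V n) zeta k ^+ (f x : nat) * (-1) ^+ (dot u x).

Definition gbent (n k : nat) (f : V n -> 'Z_(2 ^ k)) : Prop :=
  forall u : V n, `|gwalsh f u| = (2 ^ n./2)%:R.

Definition inA (n k : nat) (a : nat -> V n -> bool) (h : V n -> bool) : Prop :=
  exists c : nat -> bool, forall x : V n,
    h x = a k.-1 x (+) \big[addb/false]_(j < k.-1) (c j && a j x).

From HB Require Import structures.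
From mathcomp Require Import all_boot all_order all_algebra all_field.
From mathcomp Require Import ring zify.
Import Order.TTheory GRing.Theory Num.Theory.
Local Open Scope ring_scope.
Set Implicit Arguments. Unset Strict Implicit. Unset Printing Implicit Defensive.

(* Let m = k - 1, let zeta be the primitive 2^k-th root of unity, and call
   C = (a_0 x, ..., a_(m-1) x) the bits of x.  Grouping the x by their bits gives
   H_f(u) = sum_C S_u(C) zeta^|C|, where |C| < 2^m is the binary value of C and
   S_u(C) = sum_(bits x = C) (-1)^(a_m(x) + u.x), while the member a_m + c.a of A
   has Walsh transform sum_C (-1)^(c.C) S_u(C).  Both sides of the equivalence
   say that every S_u is a single spike of height +-2^(n/2).

   For A this is Walsh-Hadamard inversion: if all members are bent, the 4-term
   condition makes c |-> (a_m + c.a)^*(u) affine, i.e. a character c |-> c.C0 up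
   to a constant, and inversion then concentrates S_u at C0.

   For f we work in Z[zeta], with basis 1, zeta, ..., zeta^(2^m - 1).  The element
   1 - zeta is prime with residue field F_2 (the residue of P(zeta) is P(1) mod 2),
   is associate to its conjugate, and 2 = unit * (1 - zeta)^(2^m).  Hence an
   element of norm 2^n is 2^(n/2) times an element y of norm 1, and the coefficient
   of zeta^(2^m - 1) in zeta^(2^m - 1) * y * conj(y) = zeta^(2^m - 1) is the sum of
   the squares of the coefficients of y, which are thus a signed unit vector. *)

(** * Cyclotomic integers of 2-power order *)

Lemma exp2n_oneB_mod2 (R : comNzRingType) (x : R) j :
  exists y : R, (1 - x) ^+ (2 ^ j) = 1 + x ^+ (2 ^ j) + y *+ 2.
Proof.
elim: j => [|j [y Dy]]; first by exists (- x); rewrite mulr2n; ring.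
exists (x ^+ (2 ^ j) + (y * (1 + x ^+ (2 ^ j)) + y ^+ 2) *+ 2).
by rewrite expnSr exprM Dy !mulr2n exprM; ring.
Qed.

Lemma sum_sqr_eq1 (I : finType) (p : I -> int) : \sum_i p i ^+ 2 = 1 ->
  exists d, exists e : bool, forall i, p i = if i == d then (-1) ^+ e else 0.
Proof.
move=> sum1; have [d nz_pd] : exists d, p d != 0.
  have [d nz_pd | p0] := pickP (fun i => p i != 0); first by exists d.
  move: sum1; rewrite big1 => [/eqP | i _]; first by rewrite eq_sym oner_eq0.
  by have /negbFE/eqP -> := p0 i; rewrite expr0n.
have ge0_rest : 0 <= \sum_(i | i != d) p i ^+ 2 by apply: sumr_ge0 => i _; exact: sqr_ge0.
have ge1_pd : 1 <= p d ^+ 2 by move: nz_pd; rewrite expr2; move: (p d) => x; nia.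
move: sum1; rewrite (bigD1 d) //= => sum1.
have [pd2 /eqP] : p d ^+ 2 = 1 /\ \sum_(i | i != d) p i ^+ 2 = 0.
  by move: ge1_pd ge0_rest sum1; move: (p d ^+ 2) (\sum_(i | i != d) _) => a b; lia.
rewrite psumr_eq0 => [/allP rest0|i _]; last exact: sqr_ge0.
exists d, (p d == -1) => i; case: eqP => [-> | /eqP ne_i_d].
  by move/eqP: pd2; rewrite sqrf_eq1 => /orP[] /eqP ->.
by have /implyP/(_ ne_i_d) := rest0 i (mem_index_enum i); rewrite sqrf_eq0 => /eqP.
Qed.

Section CyclotomicIntegers.

Variable m : nat.
Local Notation z := (zeta m.+1).
Local Notation M := (2 ^ m)%N.
Local Notation N := (2 ^ m.+1)%N.
Implicit Types P Q T W : {poly int}.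

Lemma zeta_exp_half : z ^+ M = -1.
Proof. by rewrite /zeta rootCK // expn_gt0. Qed.

Lemma zeta_exp_order : z ^+ N = 1.
Proof. by rewrite expnS mulnC exprM zeta_exp_half sqrrN expr1n. Qed.

Lemma two_neq0 : (2 : algC) != 0.
Proof. by rewrite pnatr_eq0. Qed.

Lemma zeta_prim : N.-primitive_root z.
Proof.
have [d d_prim /(dvdn_pfactor _ _ (isT : prime 2))[e]] :=
  prim_order_exists (expn_gt0 2 m.+1) zeta_exp_order.
rewrite leq_eqVlt ltnS => /predU1P[-> <- // | lt_e_m] Dd.
have : z ^+ M = 1.
  by apply/eqP; rewrite -(prim_order_dvd d_prim) Dd dvdn_exp2l.
by rewrite zeta_exp_half => /eqP; rewrite eq_sym -addr_eq0 -mulr2n (negPf two_neq0).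
Qed.

Lemma norm_zeta : `|z| = 1.
Proof.
by apply/eqP; rewrite -(pexpr_eq1 (n := M)) ?expn_gt0 // -normrX zeta_exp_half normrN1.
Qed.

Lemma zeta_mul_conj : z * z^* = 1.
Proof. by rewrite -normCK norm_zeta expr1n. Qed.

Lemma conj_zeta : z^* = z ^+ N.-1.
Proof.
have nz_z : z != 0 by rewrite -normr_eq0 norm_zeta oner_eq0.
by apply: (mulfI nz_z); rewrite zeta_mul_conj -exprS prednK ?expn_gt0 ?zeta_exp_order.
Qed.

Definition zeval : {poly int} -> algC :=
  horner_morph (fun c : int => mulrC z c%:~R).
HB.instance Definition _ := GRing.RMorphism.on zeval.

Lemma zevalC c : zeval c%:P = c%:~R.
Proof. exact: horner_morphC. Qed.

Lemma zevalX : zeval 'X = z.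
Proof. exact: horner_morphX. Qed.

Lemma zevalXn i : zeval 'X^i = z ^+ i.
Proof. by rewrite rmorphXn /= zevalX. Qed.

Lemma zeval_coef P : (size P <= M)%N ->
  zeval P = \sum_(i < M) (P`_i)%:~R * z ^+ i.
Proof.
move=> le_P_M; rewrite [LHS](horner_coef_wide _ (n := M)).
  by apply: eq_bigr => i _; rewrite coef_map.
by rewrite size_map_inj_poly //; apply: intr_inj.
Qed.

Lemma conj_zeval P : (zeval P)^* = zeval (P \Po 'X^(N.-1)).
Proof.
rewrite /zeval /horner_morph map_comp_poly horner_comp map_polyXn hornerXn.
rewrite -conj_zeta -horner_map /= -map_poly_comp; congr (_.[_]).
by apply: eq_map_poly => c /=; rewrite rmorph_int.
Qed.

Local Notation Phi := ('X^M + 1 : {poly int}).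

Lemma size_Phi : size Phi = M.+1.
Proof. by rewrite size_polyDl ?size_polyXn // size_poly1 ltnS expn_gt0. Qed.

Lemma Phi_monic : Phi \is monic.
Proof. by rewrite monicE lead_coefDl ?lead_coefXn // size_polyXn size_poly1 ltnS expn_gt0. Qed.

Lemma zeval_Phi : zeval Phi = 0.
Proof. by rewrite rmorphD rmorph1 /= zevalXn zeta_exp_half addNr. Qed.

Lemma zeval_modPhi P : zeval (P %% Phi) = zeval P.
Proof.
rewrite {2}(Pdiv.IdomainMonic.divp_eq Phi_monic P).
by rewrite rmorphD rmorphM /= zeval_Phi mulr0 add0r.
Qed.

Lemma size_modPhi P : (size (P %% Phi)%R <= M)%N.
Proof. by rewrite -ltnS -size_Phi ltn_modpN0 ?monic_neq0 ?Phi_monic. Qed.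

Lemma zeval_small_eq0 P : (size P <= M)%N -> zeval P = 0 -> P = 0.
Proof.
move=> le_P_M P_z; apply/eqP; apply: contraTT le_P_M => nzP; rewrite -ltnNge.
pose Pq := map_poly (intr : int -> rat) P.
have size_Pq : size Pq = size P by apply: size_map_inj_poly => //; exact: intr_inj.
have [p [Dp _] dvd_p] := minCpolyP z.
have size_p : size p = M.+1.
  have <- : size (minCpoly z) = size p by rewrite Dp size_map_poly.
  by rewrite (minCpoly_cyclotomic zeta_prim) size_cyclotomic totient_pfactor // mul1n.
rewrite -size_Pq -size_p dvdp_leq //; first by rewrite -size_poly_eq0 size_Pq size_poly_eq0.
rewrite -dvd_p /root -map_poly_comp (eq_map_poly (g := intr)) => [|c /=]; last exact: ratr_int.
by rewrite -[_.[_]]/(zeval P) P_z.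
Qed.

Lemma zeval_small_inj P Q : (size P <= M)%N -> (size Q <= M)%N ->
  zeval P = zeval Q -> P = Q.
Proof.
move=> le_P le_Q PQ; apply/eqP; rewrite -subr_eq0; apply/eqP.
apply: zeval_small_eq0; last by rewrite rmorphB /= PQ subrr.
by rewrite (leq_trans (size_polyD _ _)) // size_polyN geq_max le_P.
Qed.

Lemma zeval_parity P Q : zeval P = zeval Q -> (2 %| P.[1] - Q.[1])%Z.
Proof.
move=> PQ; have R0 : (P - Q) %% Phi = 0.
  apply: zeval_small_eq0 (size_modPhi _) _.
  by rewrite zeval_modPhi rmorphB /= PQ subrr.
rewrite -hornerN -hornerD (Pdiv.IdomainMonic.divp_eq Phi_monic (P - Q)) R0 addr0.
by rewrite hornerM !hornerE expr1n dvdz_mull.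
Qed.

Lemma two_dvd_oneBzeta_exp : exists B, (1 - z) ^+ M = zeval B *+ 2.
Proof.
have [B DB] := exp2n_oneB_mod2 ('X : {poly int}) m.
exists B; have : zeval ((1 - 'X) ^+ M) = zeval ('X^M + 1 + B *+ 2).
  by rewrite DB [1 + _]addrC.
by rewrite rmorphXn rmorphB rmorphD rmorphMn rmorph1 /= zeval_Phi zevalX add0r.
Qed.

Lemma oneBzeta_exp_dvd_two : exists A, 2 = (1 - z) ^+ M * zeval A.
Proof.
have DAj j : (j <= m)%N -> exists A, 1 - z ^+ (2 ^ j) = (1 - z) ^+ (2 ^ j) * zeval A.
  elim: j => [|j IHj] le_j_m; first by exists 1; rewrite rmorph1 mulr1.
  have [A DA] := IHj (ltnW le_j_m); set s := (2 ^ j)%N in DA *.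
  set t := (1 + 2 ^ (m - j))%N; set E := \sum_(i < t) 'X^(s * i) : {poly int}.
  have DE : 1 + z ^+ s = (1 - z ^+ s) * zeval E.
    (* as (z ^+ s) ^+ t = z ^+ (s + M) = - z ^+ s *)
    rewrite rmorph_sum /=; under eq_bigr do rewrite zevalXn exprM.
    have := subrX1 (z ^+ s) t; rewrite -exprM mulnDr muln1 -expnD (subnKC (ltnW le_j_m)).
    rewrite exprD zeta_exp_half => Dt; rewrite -opprB mulNr -Dt; ring.
  exists (A ^+ 2 * E); rewrite rmorphM rmorphXn /= expnSr !exprM -/s.
  transitivity ((1 - z ^+ s) * (1 + z ^+ s)); first by ring.
  by rewrite DE DA; ring.
have [A DA] := DAj m (leqnn m).
by exists A; rewrite -DA zeta_exp_half opprK.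
Qed.

Lemma oneBzeta_neq0 : 1 - z != 0.
Proof.
have [A DA] := oneBzeta_exp_dvd_two.
by apply/eqP => oneBz0; move/eqP: DA; rewrite oneBz0 expr0n expn_eq0 /= mul0r (negPf two_neq0).
Qed.

Lemma oneBzeta_dvd_even P : (2 %| P.[1])%Z -> exists Q, zeval P = (1 - z) * zeval Q.
Proof.
case/dvdzP => t Dt; have [A DA] := oneBzeta_exp_dvd_two.
have /factor_theorem[Q DQ] : root (P - (P.[1])%:P) 1 by rewrite /root !hornerE subrr.
exists (- Q + (1 - 'X) ^+ M.-1 * A * t%:P).
have -> : P = Q * ('X - 1%:P) + (t * 2)%:P by rewrite -Dt -DQ subrK.
rewrite !(rmorphD, rmorphB, rmorphN, rmorphM, rmorphXn, rmorph1) /=.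
rewrite !zevalC zevalX -[1 + 1]/(2 : algC) DA -{1}(prednK (expn_gt0 2 m)) exprS.
by ring.
Qed.

Lemma oneBzeta_mul_conj : (1 - z) * (1 - z)^* = - (1 - z) ^+ 2 * z^*.
Proof.
transitivity (- (1 - z) ^+ 2 * z^* + (1 - z * z^*) * (1 - z)).
  by rewrite rmorphB rmorph1; ring.
by rewrite zeta_mul_conj subrr mul0r addr0.
Qed.

Lemma oneBzeta_descent j P W :
  zeval P * (zeval P)^* = (1 - z) ^+ (2 * j) * zeval W ->
  exists Y, zeval P = (1 - z) ^+ j * zeval Y.
Proof.
elim: j P W => [|j IHj] P W PW; first by exists P; rewrite mul1r.
have P1_even : (2 %| P.[1])%Z.
  have := @zeval_parity (P * (P \Po 'X^(N.-1))) ((1 - 'X) ^+ (2 * j.+1) * W).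
  rewrite !(rmorphM, rmorphXn, rmorphB, rmorph1) /= -conj_zeval PW zevalX => /(_ erefl).
  rewrite hornerM horner_comp !hornerE expr1n subrr expr0n /= mul0r subr0.
  by rewrite !dvdzE abszM Euclid_dvdM // orbb.
have [Q DQ] := oneBzeta_dvd_even P1_even.
have QW : zeval Q * (zeval Q)^* = (1 - z) ^+ (2 * j) * zeval (- 'X * W).
  apply: (mulfI (expf_neq0 2 oneBzeta_neq0)).
  move: PW; rewrite DQ rmorphM /= mulrACA oneBzeta_mul_conj mulnS exprD => PW.
  rewrite !(rmorphM, rmorphN) /= zevalX.
  transitivity (z * z^* * ((1 - z) ^+ 2 * (zeval Q * (zeval Q)^*))).
    by rewrite zeta_mul_conj mul1r.
  transitivity (- z * (- (1 - z) ^+ 2 * z^* * (zeval Q * (zeval Q)^*))); first by ring.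
  by rewrite PW; ring.
have [Y DY] := IHj Q _ QW.
by exists Y; rewrite DQ DY mulrA -exprS.
Qed.

Lemma norm_two_exp_dvd r P : zeval P * (zeval P)^* = 2 ^+ (2 * r) ->
  exists Y, zeval P = 2 ^+ r * zeval Y.
Proof.
move=> PP; have [A DA] := oneBzeta_exp_dvd_two; have [B DB] := two_dvd_oneBzeta_exp.
have [Y DY] : exists Y, zeval P = (1 - z) ^+ (M * r) * zeval Y.
  apply: (oneBzeta_descent (W := A ^+ (2 * r))).
  by rewrite PP DA exprMn rmorphXn -!exprM mulnCA.
exists (B ^+ r * Y).
by rewrite DY exprM DB rmorphM rmorphXn /= -(mulr_natl (zeval B) 2) exprMn mulrA.
Qed.

Lemma coef_modPhi T i : (i < M)%N -> (size T <= M + i)%N -> (T %% Phi)`_i = T`_i.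
Proof.
move=> lt_i_M le_T; have DT := Pdiv.IdomainMonic.divp_eq Phi_monic T.
set Q := T %/ Phi in DT; set R := T %% Phi in DT *.
have Q_small : (size Q <= i)%N.
  have [-> | nzQ] := eqVneq Q 0; first by rewrite size_poly0.
  have le_R : (size R <= M)%N := size_modPhi T.
  have size_QPhi : size (Q * Phi) = (size Q + M)%N.
    by rewrite size_Mmonic ?Phi_monic // size_Phi addnS.
  have gt0_Q : (0 < size Q)%N by rewrite size_poly_gt0.
  move: le_T; rewrite DT size_polyDl size_QPhi; first by rewrite addnC leq_add2l.
  by rewrite addnC -addn1 leq_add.
by rewrite [in RHS]DT mulrDr mulr1 !coefD coefMXn lt_i_M (nth_default _ Q_small) !add0r.
Qed.

Lemma sum_sqr_coef_unit P : (size P <= M)%N -> zeval P * (zeval P)^* = 1 ->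
  \sum_(i < M) P`_i ^+ 2 = 1.
Proof.
move=> le_P_M PP; have M_gt0 : (0 < M)%N := expn_gt0 2 m.
pose Pr := \poly_(i < M) P`_(M.-1 - i); have le_Pr_M : (size Pr <= M)%N := size_poly _ _.
have zeval_Pr : zeval Pr = z ^+ M.-1 * (zeval P)^*.
  rewrite (zeval_coef le_Pr_M) (zeval_coef le_P_M) rmorph_sum mulr_sumr /=.
  rewrite (reindex_inj rev_ord_inj); apply: eq_bigr => i _ /=; have lt_i_M := ltn_ord i.
  rewrite coef_poly ifT; last by lia.
  rewrite (_ : M.-1 - (M - i.+1) = i)%N; last by lia.
  rewrite rmorphM rmorphXn /= rmorph_int (_ : M.-1 = M - i.+1 + i)%N; last by lia.
  by rewrite exprD mulrCA -mulrA -exprMn zeta_mul_conj expr1n mulr1.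
have PPr : (P * Pr) %% Phi = 'X^(M.-1).
  apply: zeval_small_inj (size_modPhi _) _ _; first by rewrite size_polyXn prednK.
  by rewrite zeval_modPhi rmorphM /= zeval_Pr zevalXn mulrCA PP mulr1.
transitivity ((P * Pr)`_M.-1).
  rewrite coefM prednK //; apply: eq_bigr => j _; have lt_j_M := ltn_ord j.
  by rewrite coef_poly ifT ?subKn ?expr2 //; lia.
rewrite -coef_modPhi ?PPr ?coefXn ?eqxx ?prednK //.
by apply: leq_trans (size_polyMleq _ _) _; lia.
Qed.

Lemma norm_two_exp_coef r P : (size P <= M)%N ->
  zeval P * (zeval P)^* = 2 ^+ (2 * r) ->
  exists d : 'I_M, exists e : bool,
    forall i : 'I_M, P`_i = if i == d then (-1) ^+ e * 2 ^+ r else 0.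
Proof.
move=> le_P_M PP; have [Y DY] := norm_two_exp_dvd PP.
have DP : P = 2 ^+ r *: (Y %% Phi).
  apply: zeval_small_inj le_P_M _ _.
    exact: leq_trans (size_scale_leq _ _) (size_modPhi _).
  by rewrite -mul_polyC rmorphM /= zevalC zeval_modPhi DY rmorphXn.
have nz_2r : (2 ^+ (2 * r) : algC) != 0 by rewrite expf_neq0 ?two_neq0.
have unitY : zeval (Y %% Phi) * (zeval (Y %% Phi))^* = 1.
  apply: (mulfI nz_2r); rewrite mulr1 -{2}PP DY zeval_modPhi rmorphM rmorphXn /=.
  by rewrite conjC_nat mulnC exprM; ring.
have [d [e DYd]] := sum_sqr_eq1 (sum_sqr_coef_unit (size_modPhi _) unitY).
by exists d, e => i; rewrite DP coefZ DYd; case: eqP; rewrite ?mulr0 // mulrC.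
Qed.

End CyclotomicIntegers.

(** * Binary expansions and characters of F_2^m *)

Lemma binsum_lt m (b : nat -> bool) : (\sum_(j < m) 2 ^ j * b j < 2 ^ m)%N.
Proof.
elim: m => [|m IHm]; first by rewrite big_ord0.
rewrite big_ord_recr /= expnS mul2n -addnn.
by case: (b m); rewrite ?muln1 ?muln0 ?addn0 ?ltn_add2r ?ltn_addr.
Qed.

Lemma odd_binsum_div m (b : nat -> bool) j : (j < m)%N ->
  odd ((\sum_(i < m) 2 ^ i * b i) %/ 2 ^ j) = b j.
Proof.
elim: m => [//|m IHm]; rewrite ltnS leq_eqVlt big_ord_recr /= => /predU1P[-> | lt_j_m].
  by rewrite mulnC divnDMl ?expn_gt0 // divn_small ?binsum_lt //; case: (b m).
have -> : (2 ^ m * b m = 2 ^ (m - j) * b m * 2 ^ j)%N.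
  by rewrite mulnAC -expnD subnK // ltnW.
rewrite divnDMl ?expn_gt0 // oddD IHm // oddM oddX.
by rewrite subn_eq0 leqNgt lt_j_m addbF.
Qed.

Section BinaryVectors.

Variable m : nat.
Implicit Types C c : V m.

Definition zext C (j : nat) : bool := if insub j is Some i then C i else false.

Lemma zext_ord C (i : 'I_m) : zext C i = C i.
Proof. by rewrite /zext valK. Qed.

Definition binval C : nat := \sum_(j < m) 2 ^ j * C j.

Lemma binval_zext C : binval C = (\sum_(j < m) 2 ^ j * zext C j)%N.
Proof. by apply: eq_bigr => j _; rewrite zext_ord. Qed.

Lemma binval_lt C : (binval C < 2 ^ m)%N.
Proof. by rewrite binval_zext binsum_lt. Qed.

Lemma binval_inj : injective binval.
Proof.
move=> C C' eqCC'; apply/ffunP => j.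
by rewrite -!zext_ord -!(odd_binsum_div _ (ltn_ord j)) -!binval_zext eqCC'.
Qed.

Definition binord C : 'I_(2 ^ m) := Ordinal (binval_lt C).

Lemma card_V : #|V m| = (2 ^ m)%N.
Proof. by rewrite card_ffun card_bool card_ord. Qed.

Lemma binord_bij : bijective binord.
Proof.
apply: inj_card_bij; last by rewrite card_V card_ord.
by move=> C C' /(congr1 val) /binval_inj.
Qed.

Definition xorv c c' : V m := [ffun j => c j (+) c' j].
Definition zerov : V m := [ffun _ => false].

Lemma dot_xorl c c' C : dot (xorv c c') C = dot c C (+) dot c' C.
Proof.
rewrite /dot -big_split /=; apply: eq_bigr => j _; rewrite ffunE.
by case: (c j); case: (c' j); case: (C j).
Qed.

Lemma dot0l C : dot zerov C = false.
Proof. by rewrite /dot big1 // => j _; rewrite ffunE. Qed.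

Lemma dot_deltal (i : 'I_m) C : dot [ffun j => j == i] C = C i.
Proof.
rewrite /dot (bigD1 i) //= big1 => [|j /negPf ne_ji]; first by rewrite ffunE eqxx addbF.
by rewrite ffunE ne_ji.
Qed.

Lemma dot_inj C C' : (forall c, dot c C = dot c C') -> C = C'.
Proof. by move=> eq_dot; apply/ffunP => i; rewrite -!dot_deltal eq_dot. Qed.

Lemma xorv_inj c0 : injective (xorv^~ c0).
Proof.
move=> c c' /ffunP eq_cc'; apply/ffunP => j; move: (eq_cc' j); rewrite !ffunE.
by case: (c j); case: (c' j); case: (c0 j).
Qed.

Lemma sum_sign_additive (chi : V m -> bool) :
    (forall c c', chi (xorv c c') = chi c (+) chi c') ->
  \sum_c (-1) ^+ chi c = if [exists c, chi c] then 0 else (2 ^ m)%:R :> int.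
Proof.
move=> chiD; case: existsP => [[c0 chi_c0] | chi0]; last first.
  rewrite -card_V -sumr_const; apply: eq_bigr => c _.
  by case: (boolP (chi c)) => // chi_c; case: chi0; exists c.
set S := \sum_c _; have : S = - S.
  rewrite {1}/S (reindex_inj (xorv_inj (c0 := c0))) -sumrN; apply: eq_bigr => c _.
  by rewrite chiD chi_c0 addbT signrN.
by move/eqP; rewrite -subr_eq0 opprK -mulr2n -mulr_natr mulf_eq0 => /orP[/eqP|].
Qed.

Lemma sum_sign_dot C C' :
  \sum_c (-1) ^+ (dot c C (+) dot c C') = if C == C' then (2 ^ m)%:R else 0 :> int.
Proof.
rewrite sum_sign_additive => [|c c']; last first.
  by rewrite !dot_xorl; case: (dot c C); case: (dot c C'); case: (dot c' C); case: (dot c' C').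
have [<- | neCC'] := eqVneq C C'; first by case: existsP => // [[c]]; rewrite addbb.
case: existsP => // chi0; case/eqP: neCC'; apply: dot_inj => c; apply/eqP.
by rewrite -negb_add; apply/negP => chi_c; apply: chi0; exists c.
Qed.

End BinaryVectors.

(** * Spectra of A and of f *)

Lemma eq_walsh n (g h : V n -> bool) : g =1 h -> walsh g =1 walsh h.
Proof. by move=> eq_gh u; apply: eq_bigr => x _; rewrite eq_gh. Qed.

Lemma eq_dual n (g h : V n -> bool) : g =1 h -> dual g =1 dual h.
Proof. by move=> eq_gh u; rewrite /dual (eq_walsh eq_gh). Qed.

Section Spectrum.

Variables (n m : nat) (a : nat -> V n -> bool).
Implicit Types (u x : V n) (c C : V m) (e : bool).

Definition bits x : V m := [ffun j : 'I_m => a j x].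

Definition hcomb c x : bool := a m x (+) dot c (bits x).

Definition spectrum u C : int :=
  \sum_(x | bits x == C) (-1) ^+ (a m x (+) dot u x).

Lemma inAP h : inA m.+1 a h <-> exists c, h =1 hcomb c.
Proof.
split=> [[c Dh] | [c Dh]]; [exists [ffun j : 'I_m => c j] | exists (zext c)] => x;
  by rewrite Dh; congr (_ (+) _); apply: eq_bigr => j _; rewrite ?zext_ord !ffunE.
Qed.

Lemma hcomb_xorv c c' x :
  hcomb (xorv c c') x (+) hcomb c x (+) hcomb c' x (+) hcomb (zerov m) x = false.
Proof.
rewrite /hcomb dot_xorl dot0l.
by case: (a m x); case: (dot c (bits x)); case: (dot c' (bits x)).
Qed.

Lemma walsh_hcomb u c : walsh (hcomb c) u = \sum_C (-1) ^+ dot c C * spectrum u C.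
Proof.
rewrite /walsh (partition_big bits xpredT) //=; apply: eq_bigr => C _.
rewrite mulr_sumr; apply: eq_bigr => x /eqP <-.
by rewrite -signr_addb /hcomb addbA [dot c _ (+) _]addbC.
Qed.

Lemma sum_walsh_hcomb u C :
  \sum_c (-1) ^+ dot c C * walsh (hcomb c) u = (2 ^ m)%:R * spectrum u C.
Proof.
transitivity (\sum_C' (\sum_c (-1) ^+ (dot c C (+) dot c C')) * spectrum u C').
  under eq_bigr do rewrite walsh_hcomb mulr_sumr.
  rewrite exchange_big; apply: eq_bigr => C' _; rewrite mulr_suml.
  by apply: eq_bigr => c _; rewrite mulrA signr_addb.
under eq_bigr do rewrite sum_sign_dot.
rewrite (bigD1 C) //= eqxx big1 ?addr0 // => C' /negPf neC'C.
by rewrite eq_sym neC'C mul0r.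
Qed.

Definition spike u r C0 e : Prop :=
  forall C, spectrum u C = if C == C0 then (-1) ^+ e * 2 ^+ r else 0.

Lemma walsh_hcomb_spike u r C0 e c : spike u r C0 e ->
  walsh (hcomb c) u = (-1) ^+ (dot c C0 (+) e) * 2 ^+ r.
Proof.
move=> Su; rewrite walsh_hcomb (bigD1 C0) //= big1 => [|C /negPf neCC0].
  by rewrite Su eqxx addr0 mulrA signr_addb.
by rewrite Su neCC0 mulr0.
Qed.

Lemma dual_hcomb_spike u r C0 e c x0 : spike u r C0 e -> bits x0 = C0 ->
  dual (hcomb c) u = hcomb c x0 (+) a m x0 (+) e.
Proof.
move=> Su bits_x0; rewrite /dual (walsh_hcomb_spike _ Su) pmulr_llt0 ?exprn_gt0 // signr_lt0.
by rewrite /hcomb bits_x0; case: (a m x0); case: (dot c C0).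
Qed.

Lemma spike_bits u r C0 e : spike u r C0 e -> exists x0, bits x0 = C0.
Proof.
move=> Su; have [x0 /eqP <- | no_x0] := pickP (fun x => bits x == C0); first by exists x0.
have := Su C0; rewrite eqxx /spectrum big_pred0 // => /esym/eqP.
by rewrite mulf_eq0 signr_eq0 expf_eq0 pnatr_eq0 andbF.
Qed.

Lemma spike_of_walsh_affine u r (G : V m -> bool) :
    (forall c, walsh (hcomb c) u = (-1) ^+ G c * 2 ^+ r) ->
    (forall c c', G (xorv c c') (+) G c (+) G c' (+) G (zerov m) = false) ->
  exists C0, spike u r C0 (G (zerov m)).
Proof.
move=> WG G_affine; set e := G (zerov m); pose chi C c := dot c C (+) G c (+) e.
have chiD C c c' : chi C (xorv c c') = chi C c (+) chi C c'.
  move: (G_affine c c'); rewrite /chi dot_xorl -/e.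
  by case: (G (xorv c c')); case: (G c); case: (G c'); case: (e);
     case: (dot c C); case: (dot c' C).
have S_chi C : spectrum u C = if [exists c, chi C c] then 0 else (-1) ^+ e * 2 ^+ r.
  apply: (@mulfI int (2 ^ m)%:R); first by rewrite pnatr_eq0 expn_eq0.
  rewrite -sum_walsh_hcomb.
  transitivity (\sum_c (-1) ^+ chi C c * ((-1) ^+ e * 2 ^+ r) : int).
    apply: eq_bigr => c _; rewrite WG mulrA -signr_addb mulrA -signr_addb /chi.
    by rewrite -addbA addbb addbF.
  by rewrite -mulr_suml sum_sign_additive //; case: ifP; rewrite ?mul0r ?mulr0.
have [C0 /negPf chi0 | chi_all] := pickP (fun C => ~~ [exists c, chi C c]); last first.
  have := WG (zerov m); rewrite walsh_hcomb big1 => [/esym/eqP | C _].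
    by rewrite mulf_eq0 signr_eq0 expf_eq0 pnatr_eq0 andbF.
  by rewrite S_chi (negbFE (chi_all C)) mulr0.
exists C0 => C; rewrite S_chi; case: eqP => [-> | neCC0]; first by rewrite chi0.
case: existsP => // no_c; case: neCC0; apply: dot_inj => c.
have chi0c : chi C0 c = false by apply: contraFF chi0 => chi_c; apply/existsP; exists c.
have chic : chi C c = false by apply/negP => chi_c; apply: no_c; exists c.
by move: chi0c chic; rewrite /chi; case: (dot c C); case: (dot c C0); case: (G c); case: (e).
Qed.

Lemma walsh_inA_spikes r : (forall u, exists C0 e, spike u r C0 e) ->
  forall h, inA m.+1 a h -> forall u, `|walsh h u| = (2 ^ r)%:Z.
Proof.
move=> spikes h /inAP[c /eq_walsh Dh] u; have [C0 [e Su]] := spikes u.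
by rewrite Dh (walsh_hcomb_spike c Su) normrM normr_sign mul1r -natrX normr_nat natz.
Qed.

Lemma dual_inA_spikes r : (forall u, exists C0 e, spike u r C0 e) ->
  forall h0 h1 h2 h3 : V n -> bool,
    inA m.+1 a h0 -> inA m.+1 a h1 -> inA m.+1 a h2 -> inA m.+1 a h3 ->
    (forall x, h0 x (+) h1 x (+) h2 x (+) h3 x = false) ->
  forall u, dual h0 u (+) dual h1 u (+) dual h2 u (+) dual h3 u = false.
Proof.
move=> spikes h0 h1 h2 h3 /inAP[c0 D0] /inAP[c1 D1] /inAP[c2 D2] /inAP[c3 D3] h0123 u.
have [C0 [e Su]] := spikes u; have [x0 bits_x0] := spike_bits Su.
rewrite (eq_dual D0) (eq_dual D1) (eq_dual D2) (eq_dual D3).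
rewrite !(dual_hcomb_spike _ Su bits_x0) -D0 -D1 -D2 -D3.
move: (h0123 x0); move: (h0 x0) (h1 x0) (h2 x0) (h3 x0) (a m x0) => b0 b1 b2 b3 b.
by case: b0 b1 b2 b3 b => [] [] [] [] []; case: (e).
Qed.

Lemma spikes_of_inA r :
    (forall h, inA m.+1 a h -> forall u, `|walsh h u| = (2 ^ r)%:Z) ->
    (forall h0 h1 h2 h3 : V n -> bool,
       inA m.+1 a h0 -> inA m.+1 a h1 -> inA m.+1 a h2 -> inA m.+1 a h3 ->
       (forall x, h0 x (+) h1 x (+) h2 x (+) h3 x = false) ->
     forall u, dual h0 u (+) dual h1 u (+) dual h2 u (+) dual h3 u = false) ->
  forall u, exists C0 e, spike u r C0 e.
Proof.
move=> bentA dualA u; have inA_hcomb c : inA m.+1 a (hcomb c) by apply/inAP; exists c.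
pose G c := dual (hcomb c) u.
have WG c : walsh (hcomb c) u = (-1) ^+ G c * 2 ^+ r.
  by rewrite [LHS]numEsign ?num_real // bentA // -natz natrX.
have G_affine c c' : G (xorv c c') (+) G c (+) G c' (+) G (zerov m) = false.
  by apply: dualA => // x; exact: hcomb_xorv.
have [C0 Su] := spike_of_walsh_affine WG G_affine.
by exists C0, (G (zerov m)).
Qed.

End Spectrum.

Section GeneralizedWalsh.

Variables (n m : nat) (a : nat -> V n -> bool) (f : V n -> 'Z_(2 ^ m.+1)).
Hypothesis Df : forall x, f x = (\sum_(j < m.+1) 2 ^ j * a j x)%N%:R.
Local Notation z := (zeta m.+1).
Local Notation M := (2 ^ m)%N.
Implicit Types (u x : V n) (C : V m) (e : bool) (r : nat).

Lemma zeta_exp_f x : z ^+ f x = (-1) ^+ a m x * z ^+ binval (bits m a x).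
Proof.
have gt1_N : (1 < 2 ^ m.+1)%N by rewrite -{1}(expn0 2) ltn_exp2l.
rewrite Df val_Zp_nat // (expr_mod _ (zeta_exp_order m)) big_ord_recr /= exprD mulrC.
rewrite exprM zeta_exp_half; congr (_ * _ ^+ _).
by apply: eq_bigr => j _; rewrite ffunE.
Qed.

Lemma gwalsh_spectrum u :
  gwalsh f u = \sum_(C : V m) (spectrum a u C)%:~R * z ^+ binval C.
Proof.
rewrite /gwalsh (partition_big (bits m a) xpredT) //=; apply: eq_bigr => C _.
rewrite rmorph_sum /= mulr_suml; apply: eq_bigr => x /eqP <-.
by rewrite zeta_exp_f intr_sign signr_addb mulrAC.
Qed.

Lemma norm_gwalsh_spike u r C0 e : spike a u r C0 e -> `|gwalsh f u| = 2 ^+ r.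
Proof.
move=> Su; rewrite gwalsh_spectrum (bigD1 C0) //= big1 ?addr0 => [|C /negPf neCC0].
  rewrite Su eqxx intrM intr_sign normrM (normrX _ z) norm_zeta expr1n mulr1.
  by rewrite normrM normr_sign mul1r -natrX rmorph_nat normr_nat natrX.
by rewrite Su neCC0 mul0r.
Qed.

Lemma spike_of_norm_gwalsh u r : `|gwalsh f u| = 2 ^+ r -> exists C0 e, spike a u r C0 e.
Proof.
move=> norm_u; pose P := \poly_(i < M) \sum_(C : V m | binval C == i) spectrum a u C.
have le_P_M : (size P <= M)%N := size_poly _ _.
have coefP C : P`_(binval C) = spectrum a u C.
  by rewrite coef_poly binval_lt (big_pred1 C) // => C'; exact: (inj_eq (@binval_inj m)).
have zeval_P : zeval m P = gwalsh f u.
  rewrite gwalsh_spectrum (zeval_coef le_P_M) (reindex _ (onW_bij _ (binord_bij m))).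
  by apply: eq_bigr => C _; rewrite coefP.
have normP : zeval m P * (zeval m P)^* = 2 ^+ (2 * r).
  by rewrite zeval_P -normCK norm_u -exprM mulnC.
have [d [e DP]] := norm_two_exp_coef le_P_M normP.
have [binord_inv binordK binordKV] := binord_bij m.
exists (binord_inv d), e => C; rewrite -coefP (DP (binord C)).
by congr (if _ then _ else _); apply/eqP/eqP => [<- | ->]; rewrite ?binordK ?binordKV.
Qed.

End GeneralizedWalsh.

Theorem corollary1 (n k : nat) (a : nat -> V n -> bool) (f : V n -> 'Z_(2 ^ k)) :
  ~~ odd n -> (2 <= k)%N ->
  (forall x : V n, f x = (\sum_(j < k) 2 ^ j * a j x)%N%:R) ->
  gbent f <->
  ((forall h, inA k a h -> bent h) /\
   (forall h0 h1 h2 h3 : V n -> bool,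
      inA k a h0 -> inA k a h1 -> inA k a h2 -> inA k a h3 ->
      (forall x, h0 x (+) h1 x (+) h2 x (+) h3 x = false) ->
      forall u, dual h0 u (+) dual h1 u (+) dual h2 u (+) dual h3 u = false)).
Proof.
move=> _; case: k f => [// | m] f _ Df.
have gbentE : gbent f <-> forall u, exists (C0 : V m) e, spike a u n./2 C0 e.
  rewrite /gbent natrX; split=> [gbent_f u | spikes u].
    exact: spike_of_norm_gwalsh Df _ _ (gbent_f u).
  by have [C0 [e /(norm_gwalsh_spike Df)]] := spikes u.
rewrite gbentE; split=> [spikes | [bentA dualA]]; last exact: spikes_of_inA.
by split; [exact: walsh_inA_spikes | exact: dual_inA_spikes].
Qed.
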